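(* Let $Z_1,\ldots,Z_n$ be i.i.d. from a distribution $\mathcal{D}$ on a set $\mathbb{Z}$, let $\ell:\Theta\times\mathbb{Z}\to[0,\infty)$ be a loss function with risk $R(\theta)=\mathbb{E}_{Z\sim\mathcal{D}}\{\ell(\theta;Z)\}$ and risk minimizer $\theta^*=\arg\min_{\theta\in\Theta}R(\theta)$. Suppose the strong central condition holds with learning rate $\bar\omega>0$. Let the sample $S=(Z_1,\ldots,Z_n)$ be partitioned as $S=S_1\sqcup S_2$ into two sub-samples of sizes $n_1$ and $n_2$, let $\widehat\theta_{S_1}$ be any AERM computed on $S_1$, and for $\omega\ge0$ define the offline GUe-value $$G_{n,\mathrm{off}}(\theta)=\exp\bigl[-\omega\, n_2\{\widehat R_{S_2}(\widehat\theta_{S_1})-\widehat R_{S_2}(\theta)\}\bigr],$$ where $\widehat R_{S_2}(\theta)=n_2^{-1}\sum_{Z\in S_2}\ell(\theta;Z)$. If $\omega\in[0,\bar\omega)$, then $G_{n,\mathrm{off}}(\theta^* )$ is an e-value, i.e. $\mathbb{E}\{G_{n,\mathrm{off}}(\theta^* )\}\le 1$.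
   Context: For a finite sub-sample $T$ of size $m$, $\widehat R_T(\theta)=m^{-1}\sum_{Z\in T}\ell(\theta;Z)$. For fixed constants $\varepsilon,\delta\ge0$, an $(\varepsilon,\delta)$-AERM on $T$ is an estimator $\widehat\theta_T$ (a measurable function of $T$) with $\widehat R_T(\widehat\theta_T)\le\inf_{\theta\in\Theta}\widehat R_T(\theta)+\delta/m^{1+\varepsilon}$; an AERM is an $(\varepsilon,\delta)$-AERM for some such constants. Strong central condition with learning rate $\bar\omega>0$: $\mathbb{E}_{Z\sim\mathcal{D}}\exp[-\omega\{\ell(\theta;Z)-\ell(\theta^*;Z)\}]\le1$ for all $\theta\in\Theta$ and all $\omega\in[0,\bar\omega)$. An e-value is a non-negative random variable with expectation at most 1. *)

From HB Require Import structures.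
From mathcomp Require Import all_boot all_order all_algebra.
From mathcomp Require Import all_classical all_reals all_analysis.
Set Implicit Arguments. Unset Strict Implicit. Unset Printing Implicit Defensive.
Import Order.TTheory GRing.Theory Num.Theory.
Local Open Scope classical_set_scope.
Local Open Scope ring_scope.

Definition emp_risk (R : realType) (Theta Z : Type) (loss : Theta -> Z -> R)
  (m : nat) (T : m.-tuple Z) (theta : Theta) : R :=
  (m%:R)^-1 * \sum_(i < m) loss theta (tnth T i).

Definition is_AERM_eps_delta (R : realType) (Theta Z : Type)
  (loss : Theta -> Z -> R) (m : nat) (theta_hat : m.-tuple Z -> Theta)
  (eps delta : R) : Prop :=
  forall T : m.-tuple Z,
    ((emp_risk loss T (theta_hat T))%:E <=
     ereal_inf [set (emp_risk loss T th)%:E | th in [set: Theta]]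
       + (delta / (m%:R `^ (1 + eps)))%:E)%E.

Definition is_AERM (R : realType) (Theta Z : Type)
  (loss : Theta -> Z -> R) (m : nat) (theta_hat : m.-tuple Z -> Theta) : Prop :=
  exists eps delta : R, 0 <= eps /\ 0 <= delta /\
    is_AERM_eps_delta loss theta_hat eps delta.

Definition risk d (R : realType) (Zs : measurableType d) (D : probability Zs R)
  (Theta : Type) (loss : Theta -> Zs -> R) (theta : Theta) : \bar R :=
  (\int[D]_z (loss theta z)%:E)%E.

Definition strong_central_condition d (R : realType) (Zs : measurableType d)
  (D : probability Zs R) (Theta : Type) (loss : Theta -> Zs -> R)
  (theta_star : Theta) (wbar : R) : Prop :=
  forall (theta : Theta) (w : R), 0 <= w -> w < wbar ->
    (\int[D]_z (expR (- w * (loss theta z - loss theta_star z)))%:E <= 1)%E.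

Definition mutually_independent d d' (T : measurableType d) (R : realType)
  (P : probability T R) (Zs : measurableType d') (n : nat)
  (X : 'I_n -> T -> Zs) : Prop :=
  forall A : 'I_n -> set Zs, (forall i, measurable (A i)) ->
    P (\bigcap_i (X i @^-1` A i)) = (\prod_(i < n) P (X i @^-1` A i))%E.

Definition iid d d' (T : measurableType d) (R : realType)
  (P : probability T R) (Zs : measurableType d') (D : probability Zs R)
  (n : nat) (X : 'I_n -> T -> Zs) : Prop :=
  [/\ forall i, measurable_fun [set: T] (X i),
      forall i A, measurable A -> P (X i @^-1` A) = D A
    & mutually_independent P X].

Definition subsample d (T : measurableType d) (Zs : Type) (n m : nat)
  (X : 'I_n -> T -> Zs) (f : 'I_m -> 'I_n) (x : T) : m.-tuple Zs :=
  [tuple X (f j) x | j < m].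

Definition G_off d (T : measurableType d) (R : realType) (Theta Zs : Type)
  (loss : Theta -> Zs -> R) (n n1 n2 : nat) (X : 'I_n -> T -> Zs)
  (f1 : 'I_n1 -> 'I_n) (f2 : 'I_n2 -> 'I_n)
  (theta_hat : n1.-tuple Zs -> Theta) (w : R) (theta : Theta) (x : T) : R :=
  let S1 := subsample X f1 x in
  let S2 := subsample X f2 x in
  expR (- w * (n2%:R * (emp_risk loss S2 (theta_hat S1) - emp_risk loss S2 theta))).

(* Conditionally on S1, the factors exp(-w (loss (theta_hat S1) z - loss
   theta* z)), z in S2, whose product is G_off(theta* ), are independent with
   conditional mean at most 1 by the strong central condition at theta =
   theta_hat S1. Conditional expectations are avoided by integrating the
   factors out one at a time: the j-th point of S2 is independent of the
   sample restricted to S1 and to the first j - 1 points of S2, which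
   determines all earlier factors, so Fubini-Tonelli against the product of
   the two laws bounds the j-th factor by 1. That independence is proved on
   cylinder sets and extended to all measurable sets by uniqueness of finite
   measures agreeing on a pi-system. *)

From HB Require Import structures.
From mathcomp Require Import all_boot all_order all_algebra.
From mathcomp Require Import all_classical all_reals all_analysis.
From mathcomp Require Import measurable_realfun.
Import Order.TTheory GRing.Theory Num.Theory.
Local Open Scope classical_set_scope.
Local Open Scope ring_scope.

Section cylinder.
Context {dz} {Zs : measurableType dz} {n : nat}.

Definition cylinder : set (set (n.-tuple Zs)) :=
  [set [set t | forall k, A k (tnth t k)]
     | A in [set A | forall k, measurable (A k)]].

Lemma cylinderT : cylinder setT.
Proof. by exists (fun=> setT) => //; apply/seteqP; split. Qed.

Lemma cylinder_measurable : cylinder `<=` measurable.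
Proof.
move=> _ [A mA <-].
have -> : [set t | forall k, A k (tnth t k)] =
    \bigcap_(k in [set: 'I_n]) ((@tnth n Zs)^~ k @^-1` A k).
  by apply/seteqP; split => t /= At k; [move=> _|]; apply: At.
apply: fin_bigcap_measurable => [|k _]; first exact: finite_finset.
by rewrite -[X in measurable X]setTI; exact: measurable_tnth.
Qed.

Lemma cylinder_setI : setI_closed cylinder.
Proof.
move=> _ _ [A mA <-] [B mB <-].
exists (fun k => A k `&` B k); first by move=> k; exact: measurableI.
by apply/seteqP; split => t /= => [AB|[At Bt] k]; [split => k; case: (AB k)|].
Qed.

Lemma measurable_g_sigma_cylinder : measurable `<=` <<s cylinder >>.
Proof.
apply: smallest_sub; first exact: smallest_sigma_algebra.
rewrite -bigcup_seq => _ [i _ [B mB <-]].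
apply: sub_sigma_algebra.
exists (fun k => if k == i then B else setT) => [k|]; first by case: eqP.
apply/seteqP; split => t /=; first by move=> /(_ i); rewrite eqxx.
by move=> [_ Bt] k; case: eqP => // ->.
Qed.

Lemma measure_preimage_cylinder_unique {d} {T : measurableType d} {R : realType}
    {Y : T -> n.-tuple Zs} (mY : measurable_fun setT Y)
    (mu1 mu2 : {measure set T -> \bar R}) :
  (mu1 setT < +oo)%E ->
  (forall C, cylinder C -> mu1 (Y @^-1` C) = mu2 (Y @^-1` C)) ->
  forall A, measurable A -> mu1 (Y @^-1` A) = mu2 (Y @^-1` A).
Proof.
move=> mu1_fin mu12 A /measurable_g_sigma_cylinder.
apply: (@g_sigma_algebra_measure_unique _ _ _ cylinder cylinder_measurable
  (fun=> setT) (fun=> cylinderT) _ (pushforward mu1 Y) (pushforward mu2 Y)).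
- by rewrite bigcup_const.
- exact: cylinder_setI.
- exact: mu12.
- by move=> _; exact: mu1_fin.
Qed.

End cylinder.

Section mask.
Context {d} {Omega : measurableType d} {dz} {Zs : measurableType dz} {n : nat}.

(* The sample with the coordinates outside [keep] overwritten by [point]: one
   random tuple carrying exactly the kept coordinates. *)
Definition mask (Z : 'I_n -> Omega -> Zs) (keep : pred 'I_n) (w : Omega) :
  n.-tuple Zs := [tuple if keep k then Z k w else point | k < n].

Lemma tnth_mask Z (keep : pred 'I_n) w k :
  keep k -> tnth (mask Z keep w) k = Z k w.
Proof. by rewrite tnth_mktuple => ->. Qed.

Lemma measurable_mask Z (keep : pred 'I_n) :
  (forall k, measurable_fun setT (Z k)) -> measurable_fun setT (mask Z keep).
Proof.
move=> mZ; apply/measurable_fun_tnthP => k.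
rewrite (_ : _ \o _ = fun w => if keep k then Z k w else point); last first.
  by apply/funext => w; rewrite /= tnth_mktuple.
by case: (keep k).
Qed.

End mask.

Section iid_sample.
Local Open Scope ereal_scope.
Context {R : realType} {d} {Omega : measurableType d} {P : probability Omega R}.
Context {dz} {Zs : measurableType dz} {D : probability Zs R}.
Context {n : nat} {Z : 'I_n -> Omega -> Zs}.
Hypothesis Z_iid : iid P D Z.

Lemma iid_prod (A : 'I_n -> set Zs) : (forall k, measurable (A k)) ->
  P [set w | forall k, A k (Z k w)] = \prod_(k < n) D (A k).
Proof.
case: Z_iid => _ lawZ indepZ mA.
have -> : [set w | forall k, A k (Z k w)] = \bigcap_k (Z k @^-1` A k).
  by apply/seteqP; split => w /= Aw k; [move=> _|]; apply: Aw.
by rewrite indepZ //; apply: eq_bigr => k _; exact: lawZ.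
Qed.

Lemma mask_cylinder_indep {keep i} {A : 'I_n -> set Zs} {B : set Zs} :
  ~~ keep i -> (forall k, measurable (A k)) -> measurable B ->
  P ([set w | forall k, A k (tnth (mask Z keep w) k)] `&` Z i @^-1` B) =
  D B * P [set w | forall k, A k (tnth (mask Z keep w) k)].
Proof.
move=> keep_i mA mB.
have -> : [set w | forall k, A k (tnth (mask Z keep w) k)] =
    [set w | forall k, A k (if keep k then Z k w else point)].
  by apply/seteqP; split => w Aw k; have := Aw k; rewrite tnth_mktuple.
have [Apoint|] := pselect (forall k, ~~ keep k -> A k point); last first.
  move=> /existsNP[k /not_implyP[/negbTE nkeep_k nAk]].
  have -> : [set w | forall k, A k (if keep k then Z k w else point)] = set0.
    by apply/seteqP; split => // w /(_ k); rewrite nkeep_k.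
  by rewrite set0I !measure0 mule0.
pose A' k := if keep k then A k else setT.
have mA' k : measurable (A' k) by rewrite /A'; case: ifP.
have -> : [set w | forall k, A k (if keep k then Z k w else point)] =
    [set w | forall k, A' k (Z k w)].
  apply/seteqP; split => w Aw k; have := Aw k; rewrite /A'.
    by case: ifP.
  by case: ifPn => // /Apoint.
have -> : [set w | forall k, A' k (Z k w)] `&` Z i @^-1` B =
    [set w | forall k, (if k == i then B else A' k) (Z k w)].
  apply/seteqP; split => w /= => [[A'w Bw] k|ABw].
    by case: eqP => [->|_]; last exact: A'w.
  split; last by have := ABw i; rewrite eqxx.
  move=> k; have := ABw k.
  by case: eqP => [->|//]; rewrite /A' (negbTE keep_i).
rewrite (@iid_prod (fun k => if k == i then B else A' k)); last first.
  by move=> k; case: eqP.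
rewrite iid_prod //.
rewrite [LHS](bigD1 i) // [in RHS](bigD1 i) //= eqxx /A' (negbTE keep_i).
rewrite probability_setT mul1e; congr (_ * _).
by apply: eq_bigr => k /negbTE ->.
Qed.

Lemma mask_indep {keep i} {A : set (n.-tuple Zs)} {B : set Zs} :
  ~~ keep i -> measurable A -> measurable B ->
  P (mask Z keep @^-1` A `&` Z i @^-1` B) = P (mask Z keep @^-1` A) * D B.
Proof.
move=> keep_i mA mB.
have [mZ _ _] := Z_iid.
have mE : measurable (Z i @^-1` B).
  by rewrite -[X in measurable X]setTI; exact: mZ.
have DB_ge0 : (0 <= fine (D B))%R by exact/fine_ge0/measure_ge0.
pose r : {nonneg R} := NngNum DB_ge0.
have DBE : D B = (r%:num)%:E by rewrite fineK // fin_num_measure.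
rewrite DBE muleC.
apply: (measure_preimage_cylinder_unique (measurable_mask Z keep mZ)
  (mrestr P mE) (mscale r P)) => //.
- have mTE := measurableI _ _ measurableT mE.
  exact: le_lt_trans (probability_le1 P mTE) (ltry _).
- move=> _ [Ak mAk <-].
  by have := mask_cylinder_indep keep_i mAk mB; rewrite DBE.
Qed.

End iid_sample.

Section independent_pair.
Local Open Scope ereal_scope.
Context {R : realType} {d} {Omega : measurableType d} (P : probability Omega R).
Context {dy} {Ty : measurableType dy} {dz} {Zs : measurableType dz}.
Context (D : probability Zs R) {Y : Omega -> Ty} {X : Omega -> Zs}.
Hypotheses (mY : measurable_fun setT Y) (mX : measurable_fun setT X).
Hypothesis YX_indep : forall A B, measurable A -> measurable B ->
  P (Y @^-1` A `&` X @^-1` B) = P (Y @^-1` A) * D B.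

Lemma ge0_integral_indep_pair (phi : Ty * Zs -> \bar R) :
  measurable_fun setT phi -> (forall p, 0 <= phi p) ->
  \int[P]_w phi (Y w, X w) = \int[P]_w \int[D]_z phi (Y w, z).
Proof.
move=> mphi phi_ge0.
have mYX : measurable_fun setT (fun w => (Y w, X w)).
  exact: measurable_fun_pair.
pose YXm : {mfun Omega >-> (Ty * Zs)%type} :=
  HB.pack (fun w => (Y w, X w)) (isMeasurableFun.Build _ _ _ _ _ mYX).
pose Ym : {mfun Omega >-> Ty} := HB.pack Y (isMeasurableFun.Build _ _ _ _ Y mY).
have lawYX : forall E, measurable E ->
    (distribution P Ym \x D) E = distribution P YXm E.
  exact: product_measure_unique.
rewrite -(ge0_integral_distribution YXm mphi) //.
rewrite (eq_measure_integral (distribution P Ym \x D)); last first.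
  by move=> E mE _; exact/esym/lawYX.
rewrite (fubini_tonelli1 _ mphi phi_ge0) (ge0_integral_distribution Ym) //.
- exact: measurable_fun_fubini_tonelli_F.
- by move=> y; apply: integral_ge0.
Qed.

Lemma ge0_integral_mul_indep_le (psi : Ty -> R) (u : Ty -> Zs -> R) :
  measurable_fun setT psi -> measurable_fun setT (fun p => u p.1 p.2) ->
  (forall y, (0 <= psi y)%R) -> (forall y z, (0 <= u y z)%R) ->
  (forall y, \int[D]_z (u y z)%:E <= 1) ->
  \int[P]_w (psi (Y w) * u (Y w) (X w))%:E <= \int[P]_w (psi (Y w))%:E.
Proof.
move=> mpsi mu psi_ge0 u_ge0 u_le1.
have mphi : measurable_fun setT (fun p => (psi p.1 * u p.1 p.2)%:E).
  by apply/measurable_EFinP/measurable_funM => //; exact: measurableT_comp.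
have phi_ge0 p : 0 <= (psi p.1 * u p.1 p.2)%:E by rewrite lee_fin mulr_ge0.
rewrite (ge0_integral_indep_pair _ mphi phi_ge0).
apply: ge0_le_integral => //.
- by move=> w _; apply: integral_ge0 => z _; exact: phi_ge0.
- exact: (measurableT_comp (measurable_fun_fubini_tonelli_F _ mphi phi_ge0) mY).
- by apply/measurable_EFinP; exact: measurableT_comp.
move=> w _ /=; under eq_integral do rewrite EFinM.
rewrite ge0_integralZl //.
- by rewrite -[leRHS]mule1 lee_wpmul2l ?lee_fin.
- by apply/measurable_EFinP; exact: (measurable_fun_pair2 (Y w) mu).
- by move=> z _; rewrite lee_fin.
- by rewrite lee_fin.
Qed.

End independent_pair.

Definition tuple_sub {T : Type} {n m : nat} (f : 'I_m -> 'I_n)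
  (t : n.-tuple T) : m.-tuple T := [tuple tnth t (f j) | j < m].

Lemma measurable_tuple_sub {dz} {Zs : measurableType dz} {n m}
    (f : 'I_m -> 'I_n) :
  measurable_fun setT (@tuple_sub Zs n m f).
Proof.
apply/measurable_fun_tnthP => j.
rewrite (_ : _ \o _ = (@tnth n Zs)^~ (f j)); first exact: measurable_tnth.
by apply/funext => t; rewrite /= tnth_mktuple.
Qed.

Lemma tuple_sub_mask d (Omega : measurableType d) dz (Zs : measurableType dz)
  n m (Z : 'I_n -> Omega -> Zs) (keep : pred 'I_n) (f : 'I_m -> 'I_n) w :
  (forall j, keep (f j)) -> tuple_sub f (mask Z keep w) = subsample Z f w.
Proof.
by move=> keep_f; apply: eq_from_tnth => j; rewrite !tnth_mktuple keep_f.
Qed.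

Definition central_factor {R : realType} {Theta Zs : Type}
  (loss : Theta -> Zs -> R) (theta_star : Theta) (w : R) th z : R :=
  expR (- w * (loss th z - loss theta_star z)).

Lemma G_off_prod d (Omega : measurableType d) (R : realType) (Theta Zs : Type)
  (loss : Theta -> Zs -> R) n n1 n2 (Z : 'I_n -> Omega -> Zs)
  (f1 : 'I_n1 -> 'I_n) (f2 : 'I_n2 -> 'I_n) (theta_hat : n1.-tuple Zs -> Theta)
  (w : R) (theta_star : Theta) x : (0 < n2)%N ->
  G_off loss Z f1 f2 theta_hat w theta_star x =
  \prod_(k < n2) central_factor loss theta_star w
                   (theta_hat (subsample Z f1 x)) (Z (f2 k) x).
Proof.
move=> n2_gt0; rewrite /G_off /emp_risk -mulrBr [n2%:R * _]mulrA.
rewrite mulfV ?mul1r; last by rewrite pnatr_eq0 -lt0n.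
rewrite -sumrB mulr_sumr expR_sum; apply: eq_bigr => k _.
by rewrite /central_factor /subsample tnth_mktuple.
Qed.

Section offline_gue.
Context {R : realType} {d} {Omega : measurableType d}.
Context {P : probability Omega R}.
Context {dz} {Zs : measurableType dz} {D : probability Zs R}.
Context {dt} {Theta : measurableType dt} {loss : Theta -> Zs -> R}.
Hypothesis loss_meas :
  measurable_fun [set: Theta * Zs] (fun p => loss p.1 p.2).
Context {theta_star : Theta} {w : R}.
Hypothesis central_w : forall th,
  (\int[D]_z (central_factor loss theta_star w th z)%:E <= 1)%E.
Context {n : nat} {Z : 'I_n -> Omega -> Zs}.
Hypothesis Z_iid : iid P D Z.
Context {n1 n2 : nat} {f1 : 'I_n1 -> 'I_n} {f2 : 'I_n2 -> 'I_n}.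
Hypotheses (n2_gt0 : (0 < n2)%N) (f2_inj : injective f2).
Hypothesis f12_disj : forall j k, f1 j <> f2 k.
Context {theta_hat : n1.-tuple Zs -> Theta}.
Hypothesis theta_hat_meas : measurable_fun [set: n1.-tuple Zs] theta_hat.

Local Notation h := (central_factor loss theta_star w).

Lemma measurable_central_factor {dT} {T : measurableType dT}
    {tf : T -> Theta} {zf : T -> Zs} :
  measurable_fun setT tf -> measurable_fun setT zf ->
  measurable_fun setT (fun x => h (tf x) (zf x)).
Proof.
move=> mtf mzf; rewrite /central_factor.
apply: measurableT_comp => //; apply: measurable_funM => //.
apply: measurable_funB.
  exact: (measurableT_comp loss_meas (measurable_fun_pair mtf mzf)).
exact: measurableT_comp loss_meas (measurable_fun_pair (measurable_cst _) mzf).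
Qed.

Definition keep_upto (j : nat) : pred 'I_n :=
  [pred i | [forall k : 'I_n2, (f2 k == i) ==> (k < j)%N]].

Lemma keep_upto_f1 j a : keep_upto j (f1 a).
Proof.
by apply/forallP => k; apply/implyP => /eqP f2f1; case: (f12_disj a k).
Qed.

Lemma keep_upto_f2 j k : keep_upto j (f2 k) = (k < j)%N.
Proof.
apply/forallP/idP => [/(_ k)|kj k']; first by rewrite eqxx.
by apply/implyP => /eqP/f2_inj ->.
Qed.

Definition gue_prefix (j : nat) (t : n.-tuple Zs) : R :=
  \prod_(k < n2 | (k < j)%N) h (theta_hat (tuple_sub f1 t)) (tnth t (f2 k)).

Lemma measurable_gue_prefix j : measurable_fun setT (gue_prefix j).
Proof.
have mtheta : measurable_fun setT (theta_hat \o tuple_sub f1).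
  exact: measurableT_comp theta_hat_meas (measurable_tuple_sub f1).
rewrite /gue_prefix; under eq_fun do rewrite big_mkcond /=.
apply: measurable_prod => k _; case: (k < j)%N => //.
exact: measurable_central_factor mtheta (measurable_tnth _).
Qed.

Lemma gue_prefix_ge0 j t : 0 <= gue_prefix j t.
Proof. by apply: prodr_ge0 => k _; exact: expR_ge0. Qed.

Lemma theta_hat_mask j x :
  theta_hat (tuple_sub f1 (mask Z (keep_upto j) x)) =
  theta_hat (subsample Z f1 x).
Proof. by rewrite tuple_sub_mask //; exact: keep_upto_f1. Qed.

Lemma gue_prefix_maskE j x :
  gue_prefix j (mask Z (keep_upto j) x) =
  \prod_(k < n2 | (k < j)%N) h (theta_hat (subsample Z f1 x)) (Z (f2 k) x).
Proof.
rewrite /gue_prefix theta_hat_mask; apply: eq_bigr => k kj.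
by rewrite tnth_mask // keep_upto_f2.
Qed.

(* Shaped as [psi (Y x) * u (Y x) (X x)] with [Y := mask Z (keep_upto j)] and
   [X := Z (f2 j)], as required by [ge0_integral_mul_indep_le]. *)
Lemma gue_prefix_maskS j (jn2 : (j < n2)%N) x :
  gue_prefix j.+1 (mask Z (keep_upto j.+1) x) =
  gue_prefix j (mask Z (keep_upto j) x) *
  h (theta_hat (tuple_sub f1 (mask Z (keep_upto j) x)))
    (Z (f2 (Ordinal jn2)) x).
Proof.
rewrite !gue_prefix_maskE theta_hat_mask (bigD1 (Ordinal jn2)) //= mulrC.
congr (_ * _); apply: eq_bigl => k.
by rewrite ltnS ltn_neqAle andbC.
Qed.

Lemma expectation_gue_prefix_le1 j : (j <= n2)%N ->
  (\int[P]_x (gue_prefix j (mask Z (keep_upto j) x))%:E <= 1)%E.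
Proof.
have [mZ _ _] := Z_iid.
elim: j => [_|j IHj jn2].
  under eq_integral do rewrite /gue_prefix big_pred0 //.
  by rewrite integral_cst // mul1e probability_le1.
under eq_integral do rewrite gue_prefix_maskS.
apply: le_trans (IHj (ltnW jn2)).
apply: (ge0_integral_mul_indep_le P D (measurable_mask Z (keep_upto j) mZ)
  (mZ _) _ (gue_prefix j) (fun t => h (theta_hat (tuple_sub f1 t)))).
- move=> A B mA mB; apply: (mask_indep Z_iid) => //.
  by rewrite keep_upto_f2 ltnn.
- exact: measurable_gue_prefix.
- apply: measurable_central_factor measurable_snd.
  exact: measurableT_comp theta_hat_meas
           (measurableT_comp (measurable_tuple_sub f1) measurable_fst).
- exact: gue_prefix_ge0.
- by move=> t z; exact: expR_ge0.
- by move=> t; exact: central_w.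
Qed.

Lemma G_off_mask x :
  G_off loss Z f1 f2 theta_hat w theta_star x =
  gue_prefix n2 (mask Z (keep_upto n2) x).
Proof.
by rewrite G_off_prod // gue_prefix_maskE; apply: eq_bigl => k; rewrite ltn_ord.
Qed.

Theorem expectation_G_off_le1 :
  ('E_P[G_off loss Z f1 f2 theta_hat w theta_star] <= 1)%E.
Proof.
rewrite unlock; under eq_integral do rewrite G_off_mask.
exact: expectation_gue_prefix_le1.
Qed.

End offline_gue.

Theorem lemma2
  (R : realType)
  (* underlying probability space *)
  (d : measure_display) (Omega : measurableType d) (P : probability Omega R)
  (* data space and parameter space *)
  (dz : measure_display) (Zs : measurableType dz) (D : probability Zs R)
  (dt : measure_display) (Theta : measurableType dt)
  (* loss l : Theta x Z -> [0, oo), jointly measurable *)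
  (loss : Theta -> Zs -> R)
  (loss_ge0 : forall th z, 0 <= loss th z)
  (loss_meas : measurable_fun [set: Theta * Zs] (fun p => loss p.1 p.2))
  (* risk minimizer theta* *)
  (theta_star : Theta)
  (theta_star_min : forall th, (risk D loss theta_star <= risk D loss th)%E)
  (* strong central condition *)
  (wbar : R) (wbar_gt0 : 0 < wbar)
  (central : strong_central_condition D loss theta_star wbar)
  (* i.i.d. sample Z_1..Z_n *)
  (n : nat) (Z : 'I_n -> Omega -> Zs) (Z_iid : iid P D Z)
  (* partition S = S1 |_| S2 with |S1| = n1, |S2| = n2 *)
  (n1 n2 : nat) (n1_gt0 : (0 < n1)%N) (n2_gt0 : (0 < n2)%N)
  (f1 : 'I_n1 -> 'I_n) (f2 : 'I_n2 -> 'I_n)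
  (f1_inj : injective f1) (f2_inj : injective f2)
  (f12_disj : forall j k, f1 j <> f2 k)
  (f12_cover : forall i, (exists j, f1 j = i) \/ (exists k, f2 k = i))
  (* AERM computed on S1, a measurable function of the sub-sample *)
  (theta_hat : n1.-tuple Zs -> Theta)
  (theta_hat_meas : measurable_fun [set: n1.-tuple Zs] theta_hat)
  (theta_hat_AERM : is_AERM loss theta_hat)
  (w : R) (w_ge0 : 0 <= w) (w_lt : w < wbar) :
  ('E_P[G_off loss Z f1 f2 theta_hat w theta_star] <= 1)%E.
Proof.
apply: (expectation_G_off_le1 loss_meas _ Z_iid n2_gt0 f2_inj f12_disj
  theta_hat_meas).
by move=> th; exact: central.
Qed.
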